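(* Let $\rho$ be an $n$-qubit state, fix a threshold $\varepsilon\ge0$, and let $A_1,\dots,A_t\in\mathrm{GL}(n,2)$ be the gauges queried so far, $A_r$ with columns $\mathbf{a}_{r,1},\dots,\mathbf{a}_{r,n}$. Let $Q_t=\{\mathbf{a}_{r,i}:r\le t,\ i\le n\}$, $\mathcal{F}_t=\{p\in\Delta(\mathbb{F}_2^n):\widehat p(\mathbf{u})=\mu_\rho(\mathbf{u})\ \forall\mathbf{u}\in Q_t\}$, and let $p_t^-\in\arg\min_{p\in\mathcal{F}_t}p(\mathbf{0})$, $p_t^+\in\arg\max_{p\in\mathcal{F}_t}p(\mathbf{0})$ be any endpoint optimizers, $W_t=p_t^+(\mathbf{0})-p_t^-(\mathbf{0})$. Define $d_t(\mathbf{u})=|\widehat{p_t^+}(\mathbf{u})-\widehat{p_t^-}(\mathbf{u})|$ for $\mathbf{u}\neq\mathbf{0}$, $M_t=(\mathbb{F}_2^n\setminus\{\mathbf{0}\})\setminus Q_t$, $m_t=|M_t|$, $D_t=\sum_{\mathbf{u}\in M_t}d_t(\mathbf{u})$, $\Delta_t=\max_{\mathbf{u}\in M_t}d_t(\mathbf{u})$. For a gauge $A$ with columns $\mathbf{a}_1,\dots,\mathbf{a}_n$ put $\Phi_t(A)=\sum_{i=1}^n d_t(\mathbf{a}_i)$, let $\Gamma_t=\{A\in\mathrm{GL}(n,2): \{\mathbf{a}_1,\dots,\mathbf{a}_n\}\not\subseteq Q_t\}$, and let $A_{t+1}\in\arg\max_{A\in\Gamma_t}\Phi_t(A)$. Suppose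 round $t$ is nonterminal, i.e. $W_t>\varepsilon$. Then $$W_t\le 2^{-n}D_t\le\frac{m_t}{2^n}\Delta_t,\qquad\text{and}\qquad \Phi_t(A_{t+1})\ge\Delta_t\ge\frac{2^n}{m_t}W_t.$$
   Context: Setting: $|\psi\rangle$ is an $n$-qubit stabilizer state whose stabilizer group is generated by independent commuting Pauli operators $g_1,\dots,g_n$; $g(\mathbf{u})=\prod_j g_j^{u_j}$ for $\mathbf{u}\in\mathbb{F}_2^n$. Syndrome projectors $\Pi_{\mathbf{s}}=2^{-n}\prod_j(I+(-1)^{s_j}g_j)$ are orthogonal rank-one projectors summing to identity with $\Pi_{\mathbf{0}}=|\psi\rangle\langle\psi|$. $p_\rho(\mathbf{s})=\mathrm{tr}(\rho\Pi_{\mathbf{s}})$, $\mu_\rho(\mathbf{u})=\mathrm{tr}(\rho g(\mathbf{u}))=\widehat{p_\rho}(\mathbf{u})$ with Walsh transform $\widehat p(\mathbf{u})=\sum_{\mathbf{s}}(-1)^{\mathbf{u}\cdot\mathbf{s}}p(\mathbf{s})$ (mod-2 inner product). $\Delta(\mathbb{F}_2^n)$ is the set of probability distributions on $\mathbb{F}_2^n$; $\mathrm{GL}(n,2)$ the invertible binary $n\times n$ matrices, whose columns are called the labels queried by that gauge. *)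

From HB Require Import structures.
From mathcomp Require Import all_boot all_order all_algebra.
Set Implicit Arguments. Unset Strict Implicit. Unset Printing Implicit Defensive.
Import Order.TTheory GRing.Theory Num.Theory.
Local Open Scope ring_scope.

Notation vec n := 'cV['F_2]_n.

Section Defs.
Variables (R : realFieldType) (n : nat).

Definition dot2 (u s : vec n) : 'F_2 := (u^T *m s) 0 0.

Definition wsign (u s : vec n) : R := if dot2 u s == 0 then 1 else -1.

Definition walsh (p : vec n -> R) (u : vec n) : R :=
  \sum_(s : vec n) wsign u s * p s.

Definition is_distr (p : vec n -> R) : Prop :=
  (forall s, 0 <= p s) /\ \sum_(s : vec n) p s = 1.

Definition cols (A : 'M['F_2]_n) : {set vec n} := [set col i A | i : 'I_n].

Definition queried (t : nat) (As : 'I_t -> 'M['F_2]_n) : {set vec n} :=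
  [set col i (As r) | r : 'I_t, i : 'I_n].

Definition feasible (mu : vec n -> R) (Q : {set vec n}) (p : vec n -> R) : Prop :=
  is_distr p /\ forall u, u \in Q -> walsh p u = mu u.

Definition dgap (pp pm : vec n -> R) (u : vec n) : R :=
  `| walsh pp u - walsh pm u |.

Definition missing (Q : {set vec n}) : {set vec n} :=
  [set u : vec n | (u != 0) && (u \notin Q)].

Definition Phi (pp pm : vec n -> R) (A : 'M['F_2]_n) : R :=
  \sum_(i < n) dgap pp pm (col i A).

Definition in_Gamma (Q : {set vec n}) (A : 'M['F_2]_n) : Prop :=
  A \in unitmx /\ ~~ (cols A \subset Q).

End Defs.

From HB Require Import structures.
From mathcomp Require Import all_boot all_order all_algebra.
From mathcomp Require Import ring lra.
Import Order.TTheory GRing.Theory Num.Theory.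
Set Implicit Arguments. Unset Strict Implicit. Unset Printing Implicit Defensive.
Local Open Scope ring_scope.

(* Evaluating the Walsh inversion formula at the origin gives
   2^n p(0) = sum_u p^(u).  The two optimizers have the same total mass
   (p^(0)) and the same transform on the queried labels, so 2^n W_t is the
   sum of p+^(u) - p-^(u) over the missing labels, which is at most D_t and
   hence at most m_t Delta_t.  Conversely a missing label u is nonzero, so it
   is a column of some invertible gauge; that gauge lies in Gamma_t and its
   potential is at least d_t(u).  None of this needs W_t > eps. *)

Lemma F2_neq0 (x : 'F_2) : x != 0 -> x = 1.
Proof. by case: x => [[|[|?]] ?] //= _; apply/val_inj. Qed.

Lemma cV_neq0_coord (F : nzRingType) n (u : 'cV[F]_n) :
  u != 0 -> exists i, u i 0 != 0.
Proof.
move=> u0; apply/existsP; apply: contraR u0 => /existsPn u0.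
apply/eqP/matrixP => i j; rewrite [j]ord1 mxE; apply/eqP.
by rewrite -[_ == _]negbK u0.
Qed.

Lemma exists_unitmx_col (F : fieldType) n (u : 'cV[F]_n) :
  u != 0 -> exists2 A : 'M[F]_n, A \in unitmx & exists i, col i A = u.
Proof.
move=> /cV_neq0_coord [i ui0].
(* A := 1 + w has column i equal to u, and w^2 = (u_i - 1) w makes
   1 - u_i^-1 w its inverse. *)
pose e : 'cV[F]_n := delta_mx i 0.
pose w := (u - e) *m e^T.
have eTe : e^T *m e = 1%:M.
  rewrite trmx_delta mul_delta_mx.
  by apply/matrixP => a b; rewrite [a]ord1 [b]ord1 !mxE.
have eTu : e^T *m u = (u i 0)%:M.
  by apply/matrixP => a b; rewrite [a]ord1 [b]ord1 trmx_delta -rowE !mxE.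
have ww : w *m w = (u i 0 - 1) *: w.
  rewrite /w mulmxA -(mulmxA (u - e)) mulmxBr eTu eTe.
  by rewrite mulmxBr mul_mx_scalar mulmx1 mulmxBl -scalemxAl scalerBl scale1r.
exists (1%:M + w).
  apply: (proj1 (@mulmx1_unit _ _ _ (1%:M - (u i 0)^-1 *: w) _)).
  rewrite mulmxDl mul1mx mulmxBr mulmx1 -scalemxAr ww scalerA.
  by rewrite mulrBr mulVf // mulr1 scalerBl scale1r subKr subrK.
by exists i; rewrite colE mulmxDl mul1mx -mulmxA eTe mulmx1 addrC subrK.
Qed.

Lemma sum_le_card_bigmax (R : realDomainType) (T : finType) (P : {pred T})
    (f : T -> R) :
  \sum_(x in P) f x <= #|P|%:R * \big[Num.max/0]_(x in P) f x.
Proof.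
rewrite mulr_natl -sumr_const; apply: ler_sum => x Px.
exact: le_bigmax_cond.
Qed.

Section Walsh.
Variables (R : realFieldType) (n : nat).
Implicit Types (p : vec n -> R) (u v s : vec n).

Lemma dot2Dl u v s : dot2 (u + v) s = dot2 u s + dot2 v s.
Proof. by rewrite /dot2 linearD mulmxDl mxE. Qed.

Lemma dot2_0l s : dot2 0 s = 0.
Proof. by rewrite /dot2 linear0 mul0mx mxE. Qed.

Lemma dot2_0r u : dot2 u 0 = 0.
Proof. by rewrite /dot2 mulmx0 mxE. Qed.

Lemma dot2_delta i s : dot2 (delta_mx i 0) s = s i 0.
Proof. by rewrite /dot2 trmx_delta -rowE mxE. Qed.

Lemma wsignDl u v s : wsign R (u + v) s = wsign R u s * wsign R v s.
Proof.
rewrite /wsign dot2Dl.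
by case: (dot2 u s) (dot2 v s) => [[|[|?]] ?] [[|[|?]] ?];
  rewrite ?mulN1r ?opprK ?mul1r.
Qed.

Lemma sum_wsign s : \sum_u wsign R u s = if s == 0 then 2 ^+ n else 0.
Proof.
have [-> | /cV_neq0_coord [i /F2_neq0 si1]] := eqVneq s 0.
  under eq_bigr do rewrite /wsign dot2_0r eqxx.
  by rewrite sumr_const card_mx card_Fp // muln1 -natrX.
set S := \sum_u _.
(* translating u by e_i flips the sign of every term *)
have S_opp : S = - S.
  rewrite {1}/S (reindex_inj (addIr (delta_mx i 0))) -sumrN.
  apply: eq_bigr => u _; rewrite wsignDl /wsign dot2_delta si1.
  by rewrite mulrN1.
lra.
Qed.

Lemma walsh_0 p : walsh p 0 = \sum_s p s.
Proof. by apply: eq_bigr => s _; rewrite /wsign dot2_0l eqxx mul1r. Qed.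

Lemma sum_walsh p : \sum_u walsh p u = 2 ^+ n * p 0.
Proof.
rewrite /walsh exchange_big /=.
under eq_bigr do rewrite -mulr_suml sum_wsign.
rewrite (bigD1 0) //= eqxx big1 ?addr0 // => s /negbTE ->.
by rewrite mul0r.
Qed.

End Walsh.

Section Gap.
Variables (R : realFieldType) (n : nat) (pp pm : vec n -> R).
Implicit Types (Q : {set vec n}) (A B : 'M['F_2]_n).

Lemma sum_missing_walsh_gap Q :
  \sum_s pp s = \sum_s pm s -> {in Q, walsh pp =1 walsh pm} ->
  2 ^+ n * (pp 0 - pm 0) = \sum_(u in missing Q) (walsh pp u - walsh pm u).
Proof.
move=> mass_eq walshQ.
rewrite mulrBr -!sum_walsh -sumrB (bigID (mem (missing Q))) /=.
rewrite [X in _ + X]big1 ?addr0 // => u.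
rewrite inE negb_and negbK => /orP[/eqP -> | /negPn uQ].
  by rewrite !walsh_0 mass_eq subrr.
by rewrite (walshQ u uQ) subrr.
Qed.

Lemma dgap_col_le_Phi A i : dgap pp pm (col i A) <= Phi pp pm A.
Proof.
rewrite /Phi (bigD1 i) //= lerDl.
by apply: sumr_ge0 => j _; apply: normr_ge0.
Qed.

Lemma bigmax_missing_dgap_le_Phi Q B :
  (forall A, in_Gamma Q A -> Phi pp pm A <= Phi pp pm B) ->
  \big[Num.max/0]_(u in missing Q) dgap pp pm u <= Phi pp pm B.
Proof.
move=> Phi_max; apply: bigmax_le => [|u].
  by apply: sumr_ge0 => j _; apply: normr_ge0.
rewrite inE => /andP[u0 uQ].
have [A A_unit [i colA]] := exists_unitmx_col u0.
have A_Gamma : in_Gamma Q A.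
  by split=> //; apply/subsetPn; exists u => //; apply/imsetP; exists i.
by rewrite -colA; apply: le_trans (dgap_col_le_Phi A i) (Phi_max A A_Gamma).
Qed.

End Gap.

Theorem proposition8 (R : realFieldType) (n t : nat)
  (q : vec n -> R) (eps : R) (As : 'I_t -> 'M['F_2]_n)
  (pm pp : vec n -> R) (Anext : 'M['F_2]_n) :
  is_distr q ->
  0 <= eps ->
  (forall r, As r \in unitmx) ->
  feasible (walsh q) (queried As) pm ->
  (forall p, feasible (walsh q) (queried As) p -> pm 0 <= p 0) ->
  feasible (walsh q) (queried As) pp ->
  (forall p, feasible (walsh q) (queried As) p -> p 0 <= pp 0) ->
  in_Gamma (queried As) Anext ->
  (forall A, in_Gamma (queried As) A -> Phi pp pm A <= Phi pp pm Anext) ->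
  let W := pp 0 - pm 0 in
  let M := missing (queried As) in
  let m : R := (#|M|)%:R in
  let D := \sum_(u in M) dgap pp pm u in
  let Delta := \big[Num.max/0]_(u in M) dgap pp pm u in
  eps < W ->
  W <= D / 2 ^+ n /\ D / 2 ^+ n <= m / 2 ^+ n * Delta /\
  Delta <= Phi pp pm Anext /\ 2 ^+ n / m * W <= Delta.
Proof.
move=> _ _ _ [[_ pm1] pmQ] _ [[_ pp1] ppQ] _ _ Phi_max W M m D Delta _.
have two_n_gt0 : 0 < (2 : R) ^+ n by rewrite exprn_gt0.
have W_gap : 2 ^+ n * W = \sum_(u in M) (walsh pp u - walsh pm u).
  apply: sum_missing_walsh_gap; first by rewrite pp1 pm1.
  by move=> u uQ; rewrite ppQ ?pmQ.
have W_le_D : W <= D / 2 ^+ n.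
  by rewrite ler_pdivlMr // mulrC W_gap; apply: ler_sum => u _; apply: ler_norm.
have D_le_Delta : D / 2 ^+ n <= m / 2 ^+ n * Delta.
  by rewrite mulrAC ler_pM2r ?invr_gt0 //; apply: sum_le_card_bigmax.
have Delta_ge0 : 0 <= Delta by apply: bigmax_ge_id.
split=> //; split=> //; split; first exact: bigmax_missing_dgap_le_Phi.
have [-> | m_neq0] := eqVneq m 0; first by rewrite invr0 mulr0 mul0r.
have -> : Delta = 2 ^+ n / m * (m / 2 ^+ n * Delta).
  by field; rewrite m_neq0 gt_eqF.
apply: ler_wpM2l; first by apply: divr_ge0; [exact: ltW | rewrite /m ler0n].
exact: le_trans W_le_D D_le_Delta.
Qed.
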